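(* Let $(M,\Sigma_M,\mu,T)$ be a measure-preserving deterministic system, where $(M,d_M)$ is a metric space and $\Sigma_M$ contains all open balls of $(M,d_M)$. Suppose $T$ is continuous at some point $x\in M$, every open ball around $x$ has positive $\mu$-measure, and there is a set $D\in\Sigma_M$ with $\mu(D)>0$ and $d_M(T(x),D):=\inf\{d_M(T(x),m): m\in D\}>0$. Then there exists $\varepsilon>0$ such that there is no Bernoulli process (with outcome space a finite subset of $M$) to whose deterministic representation $(M,\Sigma_M,\mu,T)$ is $\varepsilon$-congruent.
   Context: A deterministic system is a quadruple $(M,\Sigma_M,\mu,T)$ where $(M,\Sigma_M,\mu)$ is a probability space and $T:M\to M$ is a bijection with $T,T^{-1}$ measurable; it is measure-preserving if $\mu(T(A))=\mu(A)$ for all $A\in\Sigma_M$. A stochastic process $\{Z_t;t\in\mathbb{Z}\}$ is a family of random variables on a common probability space with values in a common measurable space $(\bar M,\Sigma_{\bar M})$; it is stationary if the joint distribution of $(Z_{t_1+h},\dots,Z_{t_n+h})$ equals that of $(Z_{t_1},\dots,Z_{t_n})$ for all $t_i,h\in\mathbb{Z}$, $n\in\mathbb{N}$. A Bernoulli process is a process with finite outcome space $\bar M=\{s_1,\dots,s_N\}$, $\Sigma_{\bar M}$ the power set, $P\{Z_t=s_k\}=p_k$ for all $t$ and $k$, and the $Z_t$ independent. The deterministic representation of a process $\{Z_t\}$ is $(M_2,\Sigma_{M_2},\mu_2,T_2,\Phi_0)$: $M_2$ is the set of bi-infinite sequences $(m_i)_{i\in\mathbb{Z}}$ with $m_i\in\bar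 M$, $\Sigma_{M_2}$ is the $\sigma$-algebra generated by cylinder sets $\{m: m_{i_1}\in A_1,\dots,m_{i_n}\in A_n\}$ ($A_j\in\Sigma_{\bar M}$), $\mu_2$ is the unique measure assigning each such cylinder the probability $P\{Z_{i_1}\in A_1,\dots,Z_{i_n}\in A_n\}$, $T_2$ is the left shift $(T_2 m)_i=m_{i+1}$, and $\Phi_0(m)=m_0$. Two measure-preserving systems $(M_1,\Sigma_1,\mu_1,T_1)$, $(M_2,\Sigma_2,\mu_2,T_2)$ are isomorphic if there are measurable $\hat M_i\subseteq M_i$ with $\mu_i(M_i\setminus\hat M_i)=0$, $T_i\hat M_i\subseteq\hat M_i$, and a bijection $\phi:\hat M_1\to\hat M_2$ such that $\phi$ and $\phi^{-1}$ map measurable sets to measurable sets, $\mu_2(\phi(A))=\mu_1(A)$ for measurable $A\subseteq\hat M_1$, and $\phi(T_1 m)=T_2\phi(m)$ for $m\in\hat M_1$. If $\{Z_t\}$ is stationary with values in $M$ and has deterministic representation $(M_2,\Sigma_{M_2},\mu_2,T_2,\Phi_0)$, then $(M,\Sigma_M,\mu,T)$ is $\varepsilon$-congruent to it if $(M,\Sigma_M,\mu,T)$ is isomorphic to $(M_2,\Sigma_{M_2},\mu_2,T_2)$ via some $\phi$ and $d_M(m,\Phi_0(\phi(m)))<\varepsilon$ for all $m$ outside a set of $\mu$-measure $<\varepsilon$. *)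

From Stdlib Require Import Reals List ZArith.
Open Scope R_scope.

Definition image {X Y : Type} (f : X -> Y) (A : X -> Prop) : Y -> Prop :=
  fun y => exists x, A x /\ y = f x.

Definition sigma_algebra {X : Type} (S : (X -> Prop) -> Prop) : Prop :=
  S (fun _ => True) /\
  (forall A, S A -> S (fun x => ~ A x)) /\
  (forall A : nat -> X -> Prop, (forall n, S (A n)) -> S (fun x => exists n, A n x)).

Definition generated {X : Type} (G : (X -> Prop) -> Prop) (A : X -> Prop) : Prop :=
  forall S, sigma_algebra S -> (forall B, G B -> S B) -> S A.

Definition is_measure {X : Type} (S : (X -> Prop) -> Prop) (mu : (X -> Prop) -> R) : Prop :=
  (forall A, S A -> 0 <= mu A) /\
  mu (fun _ => False) = 0 /\
  (forall A : nat -> X -> Prop,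
     (forall n, S (A n)) ->
     (forall n m x, n <> m -> A n x -> A m x -> False) ->
     infinite_sum (fun n => mu (A n)) (mu (fun x => exists n, A n x))).

Definition probability_space {X : Type} (S : (X -> Prop) -> Prop) (mu : (X -> Prop) -> R) : Prop :=
  sigma_algebra S /\ is_measure S mu /\ mu (fun _ => True) = 1.

Definition measurable_map {X Y : Type} (SX : (X -> Prop) -> Prop) (SY : (Y -> Prop) -> Prop)
  (f : X -> Y) : Prop :=
  forall A, SY A -> SX (fun x => A (f x)).

Definition mp_det_system {M : Type} (S : (M -> Prop) -> Prop) (mu : (M -> Prop) -> R)
  (T : M -> M) : Prop :=
  probability_space S mu /\
  (forall x y, T x = T y -> x = y) /\ (forall y, exists x, T x = y) /\
  measurable_map S S T /\
  (forall A, S A -> S (image T A)) /\            (* T^{-1} measurable *)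
  (forall A, S A -> mu (image T A) = mu A).

Definition metric {M : Type} (d : M -> M -> R) : Prop :=
  (forall x y, 0 <= d x y) /\
  (forall x y, d x y = 0 <-> x = y) /\
  (forall x y, d x y = d y x) /\
  (forall x y z, d x z <= d x y + d y z).

Definition ball {M : Type} (d : M -> M -> R) (x : M) (r : R) : M -> Prop :=
  fun y => d x y < r.

(** Sequence space over a finite outcome type O: M2 = Z -> O. *)
Definition cylinder {O : Type} (A : (Z -> O) -> Prop) : Prop :=
  exists l : list (Z * (O -> Prop)),
    forall m, A m <-> Forall (fun p => snd p (m (fst p))) l.

Definition seq_sigma {O : Type} : ((Z -> O) -> Prop) -> Prop := generated (@cylinder O).

Definition shift {O : Type} (m : Z -> O) : Z -> O := fun i => m (i + 1)%Z.

(** mu2 is the distribution measure of a Bernoulli process with one-step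
    probabilities p: elementary cylinders {m | m_{i_j} = o_j} (distinct indices)
    get measure prod_j p(o_j) (independence + identical distribution). *)
Definition bernoulli_measure {O : Type} (p : O -> R) (mu2 : ((Z -> O) -> Prop) -> R) : Prop :=
  probability_space seq_sigma mu2 /\
  forall l : list (Z * O), NoDup (map fst l) ->
    mu2 (fun m => Forall (fun q => m (fst q) = snd q) l)
    = fold_right (fun q acc => p (snd q) * acc) 1 l.

(** Isomorphism of (M,S,mu,T) with (Z->O, seq_sigma, mu2, shift) via phi,
    together with the eps-closeness d(m, Phi_0(phi m)) < eps off a small set. *)
Definition eps_congruent {M O : Type} (S : (M -> Prop) -> Prop) (mu : (M -> Prop) -> R)
  (T : M -> M) (d : M -> M -> R) (emb : O -> M) (mu2 : ((Z -> O) -> Prop) -> R)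
  (eps : R) : Prop :=
  exists (H1 : M -> Prop) (H2 : (Z -> O) -> Prop) (phi : M -> (Z -> O)),
    S H1 /\ mu (fun m => ~ H1 m) = 0 /\ (forall m, H1 m -> H1 (T m)) /\
    seq_sigma H2 /\ mu2 (fun m => ~ H2 m) = 0 /\ (forall m, H2 m -> H2 (shift m)) /\
    (forall m, H1 m -> H2 (phi m)) /\
    (forall m m', H1 m -> H1 m' -> phi m = phi m' -> m = m') /\
    (forall w, H2 w -> exists m, H1 m /\ phi m = w) /\
    (forall A, S A -> (forall m, A m -> H1 m) -> seq_sigma (image phi A)) /\
    (forall B, seq_sigma B -> (forall w, B w -> H2 w) -> S (fun m => H1 m /\ B (phi m))) /\
    (forall A, S A -> (forall m, A m -> H1 m) -> mu2 (image phi A) = mu A) /\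
    (forall m, H1 m -> phi (T m) = shift (phi m)) /\
    exists E, S E /\ mu E < eps /\
      forall m, H1 m -> ~ E m -> d m (emb (phi m 0%Z)) < eps.

From Pilot Require Import Defs.
From Stdlib Require Import Reals List ZArith Lra Lia Classical FunctionalExtensionality PropExtensionality.
Open Scope R_scope.

(** Choose [c > 0] with [D] at distance [>= c] from [T x], and [delta > 0] such
    that [T] maps the [delta]-ball around [x] into the [c/2]-ball around [T x].
    Suppose [(M, mu, T)] is [eps]-congruent, via [phi], to a Bernoulli process
    with [eps] small.  Off a set [E] of measure [< eps], the coordinate
    [phi m 0] lies within [eps] of [m].  Hence the points whose code at time 0
    is "near [x]" have measure about [mu (ball x (delta/2))], those whose code
    is "far from [T x]" have measure about [mu D], and by independence of the
    coordinates 0 and 1 of a Bernoulli process, the points whose code passes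
    from "near" to "far" in one step have measure about the product.  But since
    [phi] intertwines [T] with the shift, such a point [m] has [T m] close to
    [T x] while its code at time 1 is far from [T x]; so the coding fails at
    [m] or at [T m], a set of measure [< 2 eps].  This contradicts [eps] being
    small compared with the product. *)

Lemma set_ext {X : Type} (A B : X -> Prop) : (forall x, A x <-> B x) -> A = B.
Proof.
  intro H; apply functional_extensionality; intro x.
  apply propositional_extensionality, H.
Qed.

Definition sum_list {I : Type} (f : I -> R) (l : list I) : R :=
  fold_right (fun i acc => f i + acc) 0 l.

Lemma sum_list_mult_l {I : Type} (f : I -> R) (l : list I) (c : R) :
  sum_list (fun i => c * f i) l = c * sum_list f l.
Proof. induction l as [|i l IH]; simpl; [ring | rewrite IH; ring]. Qed.

Lemma sum_list_mult_r {I : Type} (f : I -> R) (l : list I) (c : R) :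
  sum_list (fun i => f i * c) l = sum_list f l * c.
Proof. induction l as [|i l IH]; simpl; [ring | rewrite IH; ring]. Qed.

Section SigmaAlgebra.
Variables (X : Type) (S : (X -> Prop) -> Prop).
Hypothesis HS : sigma_algebra S.

Lemma sa_compl (A : X -> Prop) : S A -> S (fun x => ~ A x).
Proof. destruct HS as [_ [Hc _]]; auto. Qed.

Lemma sa_empty : S (fun _ => False).
Proof.
  destruct HS as [HT _].
  replace (fun _ : X => False) with (fun x : X => ~ (fun _ => True) x)
    by (apply set_ext; tauto).
  now apply sa_compl.
Qed.

Definition two_sets (A B : X -> Prop) (n : nat) : X -> Prop :=
  match n with 0%nat => A | 1%nat => B | _ => fun _ => False end.

Lemma two_sets_union (A B : X -> Prop) :
  (fun x => exists n, two_sets A B n x) = (fun x => A x \/ B x).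
Proof.
  apply set_ext; intro x; split.
  - intros [[|[|n]] Hn]; simpl in Hn; tauto.
  - intros [H|H]; [exists 0%nat | exists 1%nat]; exact H.
Qed.

Lemma sa_union (A B : X -> Prop) : S A -> S B -> S (fun x => A x \/ B x).
Proof.
  intros HA HB. rewrite <- two_sets_union.
  destruct HS as [_ [_ Hu]]. apply Hu.
  intros [|[|n]]; simpl; auto using sa_empty.
Qed.

Lemma sa_inter (A B : X -> Prop) : S A -> S B -> S (fun x => A x /\ B x).
Proof.
  intros HA HB.
  replace (fun x => A x /\ B x) with (fun x => ~ (~ A x \/ ~ B x))
    by (apply set_ext; intro x; tauto).
  apply sa_compl, sa_union; apply sa_compl; assumption.
Qed.

End SigmaAlgebra.

Arguments two_sets {X} A B n.

Ltac measurable_step :=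
  first [ assumption | apply sa_inter | apply sa_union | apply sa_compl | apply sa_empty ].

Ltac measurable :=
  repeat match goal with
  | H : probability_space ?S _ |- sigma_algebra ?S => exact (proj1 H)
  | |- seq_sigma _ => measurable_step
  | |- ?S _ => is_var S; measurable_step
  end.

Section ProbabilityMeasure.
Variables (X : Type) (S : (X -> Prop) -> Prop) (mu : (X -> Prop) -> R).
Hypothesis HP : probability_space S mu.

Lemma mu_nonneg (A : X -> Prop) : S A -> 0 <= mu A.
Proof. pose proof HP as [_ [[Hnn _] _]]; auto. Qed.

Lemma mu_empty : mu (fun _ => False) = 0.
Proof. now pose proof HP as [_ [[_ [H0 _]] _]]. Qed.

(** Finite additivity, from countable additivity on [A, B, empty, ...]. *)
Lemma mu_add (A B : X -> Prop) : S A -> S B ->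
  (forall x, A x -> B x -> False) -> mu (fun x => A x \/ B x) = mu A + mu B.
Proof.
  intros HA HB Hdis. rewrite <- two_sets_union.
  pose proof HP as [_ [[_ [_ Hadd]] _]].
  apply (uniqueness_sum (fun n => mu (two_sets A B n))).
  - apply Hadd.
    + intros [|[|n]]; simpl; measurable.
    + intros [|[|n]] [|[|m]] x Hnm K1 K2; simpl in *; eauto; lia.
  - intros e He. exists 1%nat. intros n Hn.
    replace (sum_f_R0 (fun n => mu (two_sets A B n)) n) with (mu A + mu B).
    + unfold R_dist. rewrite Rminus_diag_eq, Rabs_R0; auto.
    + destruct n as [|n]; [lia|]. clear Hn. induction n as [|n IH]; [reflexivity|].
      simpl sum_f_R0 in *. rewrite <- IH. simpl. rewrite mu_empty. ring.
Qed.

Lemma mu_list_union {I : Type} (F : I -> X -> Prop) (l : list I) :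
  NoDup l -> (forall i, S (F i)) -> (forall i j x, F i x -> F j x -> i = j) ->
  S (fun x => exists i, In i l /\ F i x) /\
  mu (fun x => exists i, In i l /\ F i x) = sum_list (fun i => mu (F i)) l.
Proof.
  intros Hnd HF Hdis. induction l as [|i l IH]; simpl.
  - replace (fun x => exists i : I, False /\ F i x) with (fun _ : X => False)
      by (apply set_ext; intro x; firstorder).
    split; [measurable | apply mu_empty].
  - inversion_clear Hnd as [|? ? Hi Hnd'].
    destruct (IH Hnd') as [HSl Hmul].
    replace (fun x => exists j, (i = j \/ In j l) /\ F j x)
      with (fun x => F i x \/ exists j, In j l /\ F j x)
      by (apply set_ext; intro x; firstorder congruence).
    split; [measurable; auto|].
    rewrite (mu_add (F i) (fun x => exists j, In j l /\ F j x)), Hmul; auto.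
    intros x Hx [j [Hj Hjx]]. apply Hi. now rewrite (Hdis i j x).
Qed.

Lemma mu_mono (A B : X -> Prop) : S A -> S B -> (forall x, A x -> B x) -> mu A <= mu B.
Proof.
  intros HA HB Hsub.
  replace B with (fun x => A x \/ (B x /\ ~ A x))
    by (apply set_ext; intro x; pose proof (Hsub x); destruct (classic (A x)); tauto).
  rewrite mu_add; measurable.
  - assert (0 <= mu (fun x => B x /\ ~ A x)) by (apply mu_nonneg; measurable).
    lra.
  - tauto.
Qed.

Lemma mu_le_1 (A : X -> Prop) : S A -> mu A <= 1.
Proof.
  intro HA. pose proof HP as [[HT _] [_ H1]]. rewrite <- H1.
  apply mu_mono; auto.
Qed.

Lemma mu_subadd (A B : X -> Prop) : S A -> S B -> mu (fun x => A x \/ B x) <= mu A + mu B.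
Proof.
  intros HA HB.
  replace (fun x => A x \/ B x) with (fun x => A x \/ (B x /\ ~ A x))
    by (apply set_ext; intro x; destruct (classic (A x)); tauto).
  rewrite mu_add; measurable; [|tauto].
  assert (mu (fun x => B x /\ ~ A x) <= mu B)
    by (apply mu_mono; measurable; tauto).
  lra.
Qed.

Lemma mu_cover (A B C : X -> Prop) : S A -> S B -> S C ->
  (forall x, A x -> B x \/ C x) -> mu A <= mu B + mu C.
Proof.
  intros HA HB HC Hcov. eapply Rle_trans; [|apply mu_subadd; auto].
  apply mu_mono; measurable. exact Hcov.
Qed.

Lemma mu_restrict_full (H B : X -> Prop) : S H -> mu (fun x => ~ H x) = 0 -> S B ->
  mu (fun x => H x /\ B x) = mu B.
Proof.
  intros HH Hnull HB.
  assert (Hsplit : mu B = mu (fun x => H x /\ B x) + mu (fun x => B x /\ ~ H x)).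
  { rewrite <- mu_add; measurable; [|tauto].
    f_equal. apply set_ext; intro x; destruct (classic (H x)); tauto. }
  assert (0 <= mu (fun x => B x /\ ~ H x)) by (apply mu_nonneg; measurable).
  assert (mu (fun x => B x /\ ~ H x) <= mu (fun x => ~ H x))
    by (apply mu_mono; measurable; tauto).
  lra.
Qed.

End ProbabilityMeasure.

Lemma enumerate_pred {O : Type} (enum : list O) (P : O -> Prop) :
  NoDup enum -> exists l, NoDup l /\ forall o, In o l <-> In o enum /\ P o.
Proof.
  induction enum as [|o e IH]; intro Hnd.
  - exists nil. split; [constructor | simpl; tauto].
  - inversion_clear Hnd as [|? ? Ho He].
    destruct (IH He) as [l [Hl Hin]].
    destruct (classic (P o)) as [HPo|HPo].
    + exists (o :: l). split.
      * constructor; [rewrite Hin; tauto | exact Hl].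
      * intro o'. simpl. rewrite Hin. split; [intros [<-|?]|intros [[<-|?] ?]]; tauto.
    + exists l. split; [exact Hl|].
      intro o'. simpl. rewrite Hin. split; [tauto|intros [[<-|?] ?]; tauto].
Qed.

Section SequenceSpace.
Variable O : Type.

Lemma coord_measurable (P : O -> Prop) (i : Z) : seq_sigma (fun w : Z -> O => P (w i)).
Proof.
  intros S _ Hcyl. apply Hcyl. exists ((i, P) :: nil). intro m.
  rewrite Forall_cons_iff, Forall_nil_iff. simpl. tauto.
Qed.

Lemma coord2_measurable (P Q : O -> Prop) (i j : Z) :
  seq_sigma (fun w : Z -> O => P (w i) /\ Q (w j)).
Proof.
  intros S _ Hcyl. apply Hcyl. exists ((i, P) :: (j, Q) :: nil). intro m.
  rewrite !Forall_cons_iff, Forall_nil_iff. simpl. tauto.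
Qed.

Variables (p : O -> R) (mu2 : ((Z -> O) -> Prop) -> R).
Hypothesis Hber : bernoulli_measure p mu2.

Let HP2 : probability_space seq_sigma mu2 := proj1 Hber.

Lemma bernoulli_point (o : O) : mu2 (fun w => w 0%Z = o) = p o.
Proof.
  replace (fun w : Z -> O => w 0%Z = o)
    with (fun m : Z -> O => Forall (fun q => m (fst q) = snd q) ((0%Z, o) :: nil)).
  - rewrite (proj2 Hber); simpl; [ring|]. repeat constructor. simpl; tauto.
  - apply set_ext; intro m. rewrite Forall_cons_iff, Forall_nil_iff. simpl. tauto.
Qed.

Lemma bernoulli_pair (o1 o2 : O) :
  mu2 (fun w => w 0%Z = o1 /\ w 1%Z = o2) = p o1 * p o2.
Proof.
  replace (fun w : Z -> O => w 0%Z = o1 /\ w 1%Z = o2)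
    with (fun m : Z -> O =>
            Forall (fun q => m (fst q) = snd q) ((0%Z, o1) :: (1%Z, o2) :: nil)).
  - rewrite (proj2 Hber); simpl; [ring|].
    constructor; [simpl; intros [H|[]]; discriminate|].
    repeat constructor. simpl; tauto.
  - apply set_ext; intro m. rewrite !Forall_cons_iff, Forall_nil_iff. simpl. tauto.
Qed.

Lemma bernoulli_first_in (l : list O) : NoDup l ->
  mu2 (fun w => In (w 0%Z) l) = sum_list p l.
Proof.
  intro Hl.
  replace (fun w : Z -> O => In (w 0%Z) l)
    with (fun w : Z -> O => exists o, In o l /\ w 0%Z = o)
    by (apply set_ext; intro w; firstorder congruence).
  destruct (mu_list_union _ _ _ HP2 (fun o w => w 0%Z = o) l Hl) as [_ ->].
  - intro o. apply (coord_measurable (fun z => z = o)).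
  - intros o o' w <- <-. reflexivity.
  - f_equal. extensionality o. apply bernoulli_point.
Qed.

Lemma bernoulli_first_two_in (l1 l2 : list O) : NoDup l1 -> NoDup l2 ->
  mu2 (fun w => In (w 0%Z) l1 /\ In (w 1%Z) l2) = sum_list p l1 * sum_list p l2.
Proof.
  intros Hl1 Hl2.
  assert (Hrow : forall o1, mu2 (fun w => w 0%Z = o1 /\ In (w 1%Z) l2) = p o1 * sum_list p l2).
  { intro o1.
    replace (fun w : Z -> O => w 0%Z = o1 /\ In (w 1%Z) l2)
      with (fun w : Z -> O => exists o2, In o2 l2 /\ (w 0%Z = o1 /\ w 1%Z = o2))
      by (apply set_ext; intro w; firstorder congruence).
    destruct (mu_list_union _ _ _ HP2 (fun o2 w => w 0%Z = o1 /\ w 1%Z = o2) l2 Hl2) as [_ ->].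
    - intro o2. apply (coord2_measurable (fun z => z = o1) (fun z => z = o2)).
    - intros o o' w [_ <-] [_ <-]. reflexivity.
    - rewrite <- sum_list_mult_l. f_equal. extensionality o2. apply bernoulli_pair. }
  replace (fun w : Z -> O => In (w 0%Z) l1 /\ In (w 1%Z) l2)
    with (fun w : Z -> O => exists o1, In o1 l1 /\ (w 0%Z = o1 /\ In (w 1%Z) l2))
    by (apply set_ext; intro w; firstorder congruence).
  destruct (mu_list_union _ _ _ HP2 (fun o1 w => w 0%Z = o1 /\ In (w 1%Z) l2) l1 Hl1) as [_ ->].
  - intro o1. apply (coord2_measurable (fun z => z = o1) (fun z => In z l2)).
  - intros o o' w [<- _] [<- _]. reflexivity.
  - rewrite <- sum_list_mult_r. f_equal. extensionality o1. apply Hrow.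
Qed.

Lemma bernoulli_independent (enum : list O) (P Q : O -> Prop) :
  (forall o, In o enum) -> NoDup enum ->
  mu2 (fun w => P (w 0%Z) /\ Q (w 1%Z)) = mu2 (fun w => P (w 0%Z)) * mu2 (fun w => Q (w 0%Z)).
Proof.
  intros Henum Hnd.
  destruct (enumerate_pred enum P Hnd) as [lP [HlP HinP]].
  destruct (enumerate_pred enum Q Hnd) as [lQ [HlQ HinQ]].
  assert (EP : forall o, In o lP <-> P o) by (intro o; rewrite HinP; intuition).
  assert (EQ : forall o, In o lQ <-> Q o) by (intro o; rewrite HinQ; intuition).
  replace (fun w : Z -> O => P (w 0%Z) /\ Q (w 1%Z))
    with (fun w : Z -> O => In (w 0%Z) lP /\ In (w 1%Z) lQ)
    by (apply set_ext; intro w; now rewrite EP, EQ).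
  replace (fun w : Z -> O => P (w 0%Z)) with (fun w : Z -> O => In (w 0%Z) lP)
    by (apply set_ext; intro w; apply EP).
  replace (fun w : Z -> O => Q (w 0%Z)) with (fun w : Z -> O => In (w 0%Z) lQ)
    by (apply set_ext; intro w; apply EQ).
  rewrite bernoulli_first_two_in, !bernoulli_first_in; auto.
Qed.

End SequenceSpace.

Lemma mp_preimage {M : Type} (S : (M -> Prop) -> Prop) (mu : (M -> Prop) -> R) (T : M -> M)
  (A : M -> Prop) : mp_det_system S mu T -> S A ->
  S (fun m => A (T m)) /\ mu (fun m => A (T m)) = mu A.
Proof.
  intros (_ & _ & Tsurj & Tmeas & _ & Tmu) HA.
  assert (HTA : S (fun m => A (T m))) by (apply Tmeas, HA).
  split; [exact HTA|].
  rewrite <- (Tmu _ HTA). f_equal. apply set_ext; intro y. unfold image. split.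
  - now intros [z [Hz ->]].
  - intro Hy. destruct (Tsurj y) as [z <-]. now exists z.
Qed.

Section Pullback.
Variables (M O : Type) (S : (M -> Prop) -> Prop) (mu : (M -> Prop) -> R)
  (mu2 : ((Z -> O) -> Prop) -> R) (H1 : M -> Prop) (H2 : (Z -> O) -> Prop) (phi : M -> Z -> O).
Hypothesis HP2 : probability_space seq_sigma mu2.
Hypothesis HS2 : seq_sigma H2.
Hypothesis Hnull2 : mu2 (fun w => ~ H2 w) = 0.
Hypothesis Hmap : forall m, H1 m -> H2 (phi m).
Hypothesis Hsurj : forall w, H2 w -> exists m, H1 m /\ phi m = w.
Hypothesis Hpre : forall B, seq_sigma B -> (forall w, B w -> H2 w) -> S (fun m => H1 m /\ B (phi m)).
Hypothesis Hmeas : forall A, S A -> (forall m, A m -> H1 m) -> mu2 (image phi A) = mu A.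

Lemma pullback (B : (Z -> O) -> Prop) : seq_sigma B ->
  S (fun m => H1 m /\ B (phi m)) /\ mu (fun m => H1 m /\ B (phi m)) = mu2 B.
Proof.
  intro HB.
  assert (Hpull : S (fun m => H1 m /\ B (phi m))).
  { replace (fun m => H1 m /\ B (phi m)) with (fun m => H1 m /\ (H2 (phi m) /\ B (phi m)))
      by (apply set_ext; intro m; pose proof (Hmap m); tauto).
    apply (Hpre (fun w => H2 w /\ B w)); [measurable | tauto]. }
  split; [exact Hpull|].
  rewrite <- (Hmeas _ Hpull) by tauto.
  rewrite <- (mu_restrict_full _ _ _ HP2 H2 B); auto.
  f_equal. apply set_ext; intro w. unfold image. split.
  - intros [m [[Hm HBm] ->]]. auto.
  - intros [Hw HBw]. destruct (Hsurj w Hw) as [m [Hm <-]]. now exists m.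
Qed.

End Pullback.

Lemma small_error_contradiction (a b u v e eps : R) :
  0 < a <= 1 -> 0 < b <= 1 -> 0 <= e < eps -> eps <= a * b / 8 ->
  b <= u + e -> a <= v + e -> u * v <= 2 * e -> False.
Proof.
  intros [Ha Ha1] [Hb Hb1] [He0 He] Heps Hu Hv Huv.
  assert (Hab : a * b <= b) by nra.
  assert (Hba : a * b <= a) by nra.
  assert (Hu' : 7 * b / 8 <= u) by lra.
  assert (Hv' : 7 * a / 8 <= v) by lra.
  assert (Hprod : (7 * b / 8) * (7 * a / 8) <= u * v)
    by (apply Rmult_le_compat; lra).
  nra.
Qed.

Section NoCongruence.
Variables (M : Type) (S : (M -> Prop) -> Prop) (mu : (M -> Prop) -> R) (T : M -> M)
  (d : M -> M -> R).
Hypothesis Hsys : mp_det_system S mu T.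
Hypothesis Hd : metric d.

Variables (x : M) (c delta : R) (D : M -> Prop).
Hypothesis Hball : S (ball d x (delta / 2)).
Hypothesis HD : S D.
Hypothesis HcD : forall m, D m -> c <= d (T x) m.
Hypothesis Hcont_x : forall y, d x y < delta -> d (T x) (T y) < c / 2.

Variables (O : Type) (enum : list O) (p : O -> R) (emb : O -> M)
  (mu2 : ((Z -> O) -> Prop) -> R).
Hypothesis Henum : forall o, In o enum.
Hypothesis Hnodup : NoDup enum.
Hypothesis Hber : bernoulli_measure p mu2.

Variables (eps : R) (H1 : M -> Prop) (H2 : (Z -> O) -> Prop) (phi : M -> Z -> O)
  (E : M -> Prop).
Hypothesis Heps_c : eps <= c / 4.
Hypothesis Heps_delta : eps <= delta / 4.
Hypothesis HS1 : S H1.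
Hypothesis Hnull1 : mu (fun m => ~ H1 m) = 0.
Hypothesis Hinv1 : forall m, H1 m -> H1 (T m).
Hypothesis HS2 : seq_sigma H2.
Hypothesis Hnull2 : mu2 (fun w => ~ H2 w) = 0.
Hypothesis Hmap : forall m, H1 m -> H2 (phi m).
Hypothesis Hsurj : forall w, H2 w -> exists m, H1 m /\ phi m = w.
Hypothesis Hpre : forall B, seq_sigma B -> (forall w, B w -> H2 w) -> S (fun m => H1 m /\ B (phi m)).
Hypothesis Hmeas : forall A, S A -> (forall m, A m -> H1 m) -> mu2 (image phi A) = mu A.
Hypothesis Hshift : forall m, H1 m -> phi (T m) = Defs.shift (phi m).
Hypothesis HSE : S E.
Hypothesis Hclose : forall m, H1 m -> ~ E m -> d m (emb (phi m 0%Z)) < eps.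

Let HP : probability_space S mu := proj1 Hsys.
Let HP2 : probability_space seq_sigma mu2 := proj1 Hber.

Definition near (o : O) : Prop := d x (emb o) < eps + delta / 2.
Definition far (o : O) : Prop := c - eps <= d (T x) (emb o).

Definition code_set (P : O -> Prop) : M -> Prop := fun m => H1 m /\ P (phi m 0%Z).

Lemma coded_pullback (B : (Z -> O) -> Prop) : seq_sigma B ->
  S (fun m => H1 m /\ B (phi m)) /\ mu (fun m => H1 m /\ B (phi m)) = mu2 B.
Proof. exact (pullback M O S mu mu2 H1 H2 phi HP2 HS2 Hnull2 Hmap Hsurj Hpre Hmeas B). Qed.

Lemma code_set_measure (P : O -> Prop) :
  S (code_set P) /\ mu (code_set P) = mu2 (fun w => P (w 0%Z)).
Proof. exact (coded_pullback _ (coord_measurable O P 0%Z)). Qed.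

Lemma code_lower_bound (P : O -> Prop) (A : M -> Prop) : S A ->
  (forall m, A m -> H1 m -> ~ E m -> P (phi m 0%Z)) -> mu A <= mu (code_set P) + mu E.
Proof.
  intros HA HAP.
  rewrite <- (mu_restrict_full _ _ _ HP H1 A) by auto.
  apply (mu_cover _ S mu HP); [measurable | apply code_set_measure | exact HSE |].
  intros m [Hm HAm]. destruct (classic (E m)) as [HE|HE]; [now right|].
  left. split; auto.
Qed.

Lemma near_lower_bound : mu (ball d x (delta / 2)) <= mu (code_set near) + mu E.
Proof.
  apply code_lower_bound; auto. intros m Hm H1m HEm.
  pose proof (Hclose m H1m HEm). destruct Hd as (_ & _ & _ & Htri).
  pose proof (Htri x m (emb (phi m 0%Z))). unfold ball in Hm. unfold near. lra.
Qed.

Lemma far_lower_bound : mu D <= mu (code_set far) + mu E.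
Proof.
  apply code_lower_bound; auto. intros m Hm H1m HEm.
  pose proof (Hclose m H1m HEm). pose proof (HcD m Hm). destruct Hd as (_ & _ & Hsym & Htri).
  pose proof (Htri (T x) (emb (phi m 0%Z)) m). rewrite (Hsym (emb _) m) in *. unfold far. lra.
Qed.

(** A point near [x] is mapped near [T x], so its code cannot pass from [near]
    to [far] in one step unless the coding fails at time 0 or at time 1. *)
Lemma transition_upper_bound :
  mu (fun m => H1 m /\ near (phi m 0%Z) /\ far (phi m 1%Z)) <= 2 * mu E.
Proof.
  destruct (mp_preimage S mu T E Hsys HSE) as [HSTE HmuTE].
  replace (2 * mu E) with (mu E + mu (fun m => E (T m))) by lra.
  apply (mu_cover _ S mu HP); auto.
  - exact (proj1 (coded_pullback _ (coord2_measurable O near far 0%Z 1%Z))).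
  - intros m [H1m [Hnear Hfar]].
    destruct (classic (E m)) as [HE|HE]; [now left|].
    destruct (classic (E (T m))) as [HTE|HTE]; [now right|].
    exfalso. destruct Hd as (_ & _ & Hsym & Htri).
    pose proof (Hclose m H1m HE) as Hcode0.
    pose proof (Hclose (T m) (Hinv1 m H1m) HTE) as Hcode1.
    rewrite Hshift in Hcode1 by exact H1m. unfold Defs.shift in Hcode1. simpl in Hcode1.
    pose proof (Htri x (emb (phi m 0%Z)) m). rewrite (Hsym (emb _) m) in *.
    assert (HTxTm : d (T x) (T m) < c / 2) by (apply Hcont_x; unfold near in Hnear; lra).
    pose proof (Htri (T x) (T m) (emb (phi m 1%Z))). unfold far in Hfar. lra.
Qed.

(** Independence of the Bernoulli coordinates, transported to [M]. *)
Lemma transition_product :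
  mu (fun m => H1 m /\ near (phi m 0%Z) /\ far (phi m 1%Z))
  = mu (code_set near) * mu (code_set far).
Proof.
  rewrite (proj2 (code_set_measure near)), (proj2 (code_set_measure far)).
  rewrite <- (bernoulli_independent O p mu2 Hber enum) by auto.
  exact (proj2 (coded_pullback _ (coord2_measurable O near far 0%Z 1%Z))).
Qed.

Lemma no_small_congruence : 0 < mu D -> 0 < mu (ball d x (delta / 2)) ->
  eps <= mu D * mu (ball d x (delta / 2)) / 8 -> mu E < eps -> False.
Proof.
  intros HmuD Hmub Heps HmuE.
  apply (small_error_contradiction (mu D) (mu (ball d x (delta / 2)))
           (mu (code_set near)) (mu (code_set far)) (mu E) eps).
  - split; [exact HmuD | apply (mu_le_1 _ _ _ HP D HD)].
  - split; [exact Hmub | apply (mu_le_1 _ _ _ HP _ Hball)].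
  - split; [apply (mu_nonneg _ _ _ HP E HSE) | exact HmuE].
  - exact Heps.
  - apply near_lower_bound.
  - apply far_lower_bound.
  - rewrite <- transition_product. apply transition_upper_bound.
Qed.

End NoCongruence.

Theorem theorem1 (M : Type) (S : (M -> Prop) -> Prop) (mu : (M -> Prop) -> R)
  (T : M -> M) (d : M -> M -> R)
  (Hsys : mp_det_system S mu T) (Hd : metric d)
  (Hballs : forall y r, 0 < r -> S (ball d y r))
  (x : M)
  (Hcont : forall e, 0 < e -> exists delta, 0 < delta /\
             forall y, d x y < delta -> d (T x) (T y) < e)
  (Hpos : forall r, 0 < r -> 0 < mu (ball d x r))
  (D : M -> Prop) (HD : S D) (HmuD : 0 < mu D)
  (HdistD : exists c, 0 < c /\ forall m, D m -> c <= d (T x) m) :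
  exists eps, 0 < eps /\
    forall (O : Type) (enum : list O) (p : O -> R) (emb : O -> M)
           (mu2 : ((Z -> O) -> Prop) -> R),
      (forall o, In o enum) -> NoDup enum ->
      (forall o o', emb o = emb o' -> o = o') ->
      bernoulli_measure p mu2 ->
      ~ eps_congruent S mu T d emb mu2 eps.
Proof.
  destruct HdistD as [c [Hc HcD]].
  destruct (Hcont (c / 2)) as [delta [Hdelta Hcont_x]]; [lra|].
  assert (Hmub : 0 < mu (ball d x (delta / 2))) by (apply Hpos; lra).
  set (eps := Rmin (Rmin (c / 4) (delta / 4)) (mu D * mu (ball d x (delta / 2)) / 8)).
  assert (Heps_c : eps <= c / 4) by (unfold eps; eauto using Rle_trans, Rmin_l).
  assert (Heps_delta : eps <= delta / 4) by (unfold eps; eauto using Rle_trans, Rmin_l, Rmin_r).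
  assert (Heps_ab : eps <= mu D * mu (ball d x (delta / 2)) / 8) by apply Rmin_r.
  exists eps. split.
  { assert (0 < mu D * mu (ball d x (delta / 2))) by (apply Rmult_lt_0_compat; lra).
    unfold eps. repeat apply Rmin_glb_lt; lra. }
  intros O enum p emb mu2 Henum Hnodup _ Hber
    (H1 & H2 & phi & HS1 & Hnull1 & Hinv1 & HS2 & Hnull2 & _ & Hmap & _ & Hsurj & _ &
     Hpre & Hmeas & Hshift & E & HSE & HmuE & Hclose).
  assert (Hball : S (ball d x (delta / 2))) by (apply Hballs; lra).
  eapply (no_small_congruence M S mu T d Hsys Hd x c delta D Hball HD HcD Hcont_x
            O enum p emb mu2 Henum Hnodup Hber eps H1 H2 phi E); eauto.
Qed.
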